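(* Let $W$ be a right-angled Coxeter group with simple generators $S$, and let $x_1,x_2,y_1,y_2\in W$ form a butterfly. If $q\in D_L(y_1)\cap D_L(y_2)$, then $q\in D_L(x_1)\cap D_L(x_2)$.
   Context: $W$ is right-angled: every two distinct simple generators either commute or generate an infinite dihedral group. $\ell$ is length, $D_L(x)=\{q\in S:\ell(qx)<\ell(x)\}$, $\le$ Bruhat order and $\lessdot$ its covers. Elements $x_1,x_2,y_1,y_2$ with $x_1\ne x_2$, $y_1\ne y_2$ form a butterfly if $x_a\lessdot y_b$ for all $a,b\in\{1,2\}$. *)

From Stdlib Require Import Relations.Relation_Operators.
From mathcomp Require Import all_boot.
Set Implicit Arguments. Unset Strict Implicit. Unset Printing Implicit Defensive.

(* A right-angled Coxeter system is given by a finite set S of simple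
   generators and a relation [c] on S: for s <> t, [c s t] means m(s,t) = 2
   (s and t commute); otherwise m(s,t) = infinity.  Elements of W are
   represented by words (seq S); two words represent the same element of W
   iff they are related by [wequiv c], the congruence generated by the
   defining relations s s = 1 and s t = t s (when c s t). *)
Section RACG.
Variables (S : finType) (c : rel S).

Inductive wstep : seq S -> seq S -> Prop :=
  | wstep_cancel (a b : seq S) (s : S) : wstep (a ++ [:: s; s] ++ b) (a ++ b)
  | wstep_comm (a b : seq S) (s t : S) :
      c s t -> wstep (a ++ [:: s; t] ++ b) (a ++ [:: t; s] ++ b).

Definition wequiv : seq S -> seq S -> Prop := clos_refl_sym_trans _ wstep.

Definition len_lt (u v : seq S) : Prop :=
  exists u', wequiv u u' /\ forall v', wequiv v v' -> size u' < size v'.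

Definition left_descent (q : S) (x : seq S) : Prop := len_lt (q :: x) x.

Definition reflection (t : seq S) : Prop :=
  exists (w : seq S) (s : S), wequiv t (w ++ s :: rev w).

Definition bstep (u v : seq S) : Prop :=
  exists t, reflection t /\ wequiv v (u ++ t) /\ len_lt u v.

Definition bruhat_lt : seq S -> seq S -> Prop := clos_trans _ bstep.
Definition bruhat_le (u v : seq S) : Prop := wequiv u v \/ bruhat_lt u v.
Definition bruhat_cover (u v : seq S) : Prop :=
  bruhat_lt u v /\ ~ (exists z, bruhat_lt u z /\ bruhat_lt z v).

Definition butterfly (x1 x2 y1 y2 : seq S) : Prop :=
  ~ wequiv x1 x2 /\ ~ wequiv y1 y2 /\
  bruhat_cover x1 y1 /\ bruhat_cover x1 y2 /\
  bruhat_cover x2 y1 /\ bruhat_cover x2 y2.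
End RACG.

(* If q were not a left descent of x_a, then, since x_a is covered by y1 and
   by y2, both would equal q x_a.  Indeed, for x < y with q an ascent of x and
   a descent of y, the lifting property of the Bruhat order gives q x <= y,
   and x < q x <= y forces q x = y when y covers x.  Lifting is proved along a
   chain of Bruhat steps; a single step u < t u reduces to the strong exchange
   condition, which comes from Tits' argument: the parity of the number of
   occurrences of a reflection t in the reflection sequence of a word depends
   only on the group element, and it is odd when t shortens the word, so t
   then acts by deleting a letter. *)

From mathcomp Require Import all_boot zify boolp.
From Stdlib Require Import Relations.Relation_Operators Relations.Operators_Properties.
From Stdlib Require Import Setoid Morphisms.
Set Implicit Arguments. Unset Strict Implicit. Unset Printing Implicit Defensive.

Section RightAngledCoxeter.
Variables (S : finType) (c : rel S).
Local Notation "u ≡ v" := (wequiv c u v) (at level 70).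

Lemma wequiv_refl u : u ≡ u. Proof. exact: rst_refl. Qed.
#[local] Hint Resolve wequiv_refl : core.

Instance wequiv_Equivalence : Equivalence (wequiv c).
Proof. split; [exact: rst_refl | exact: rst_sym | exact: rst_trans]. Qed.

Lemma wstep_cat p a b q : wstep c a b -> wstep c (p ++ a ++ q) (p ++ b ++ q).
Proof.
case=> [x y s|x y s t cst]; rewrite -!catA.
  by have := wstep_cancel c (p ++ x) (y ++ q) s; rewrite -!catA.
by have := wstep_comm (p ++ x) (y ++ q) cst; rewrite -!catA.
Qed.

Lemma wequiv_cat p a b q : a ≡ b -> p ++ a ++ q ≡ p ++ b ++ q.
Proof.
elim=> [x y st|x|x y _ IH|x y z _ IH1 _ IH2].
- exact/rst_step/wstep_cat.
- reflexivity.
- by symmetry.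
- by transitivity (p ++ y ++ q).
Qed.

Instance cat_Proper : Proper (wequiv c ==> wequiv c ==> wequiv c) (@cat S).
Proof.
move=> a a' aa' b b' bb'; transitivity (a' ++ b); first exact: (wequiv_cat [::] b aa').
by have := wequiv_cat a' [::] bb'; rewrite !cats0.
Qed.

Instance cons_Proper s : Proper (wequiv c ==> wequiv c) (cons s).
Proof. by move=> a a' aa'; rewrite -cat1s aa'. Qed.

Lemma wequiv_consK s b : s :: s :: b ≡ b.
Proof. exact/rst_step/(wstep_cancel c [::]). Qed.

Lemma wequiv_commute s t b : c s t -> s :: t :: b ≡ t :: s :: b.
Proof. by move=> cst; apply/rst_step/(wstep_comm [::]). Qed.

Lemma wequiv_cat_rev x : x ++ rev x ≡ [::].
Proof.
elim: x => [|s x IH] //=.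
by rewrite rev_cons -cats1 catA IH wequiv_consK.
Qed.

Lemma wequiv_rev_cat x : rev x ++ x ≡ [::].
Proof. by have := wequiv_cat_rev (rev x); rewrite revK. Qed.

Lemma wequiv_rev a b : a ≡ b -> rev a ≡ rev b.
Proof.
move=> ab; transitivity (rev a ++ b ++ rev b); first by rewrite wequiv_cat_rev cats0.
by rewrite -(wequiv_cat (rev a) (rev b) ab) catA wequiv_rev_cat.
Qed.

Instance rev_Proper : Proper (wequiv c ==> wequiv c) (@rev S).
Proof. exact: wequiv_rev. Qed.

Lemma wequiv_odd_size a b : a ≡ b -> odd (size a) = odd (size b).
Proof.
elim=> [x y []|//|x y _ //|x y z _ -> //] p q *; by rewrite !size_cat !oddD.
Qed.

Lemma wequiv_conjK s a : s :: (s :: a ++ [:: s]) ++ [:: s] ≡ a.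
Proof. by rewrite /= -catA /= !wequiv_consK cats0. Qed.

Lemma conj_wequiv s a b : s :: a ++ [:: s] ≡ s :: b ++ [:: s] <-> a ≡ b.
Proof.
split=> [ab|->] //.
by rewrite -(wequiv_conjK s a) -(wequiv_conjK s b) ab.
Qed.

Lemma reflection_conj p t : reflection c t -> reflection c (p ++ t ++ rev p).
Proof. by case=> x [s tx]; exists (p ++ x), s; rewrite tx rev_cat -!catA. Qed.

Lemma reflection_sq t : reflection c t -> t ++ t ≡ [::].
Proof.
case=> x [s ->]; rewrite -catA /= (catA (rev x)) wequiv_rev_cat /=.
by rewrite wequiv_consK wequiv_cat_rev.
Qed.

Lemma reflectionK t w : reflection c t -> t ++ (t ++ w) ≡ w.
Proof. by move=> reft; rewrite catA reflection_sq. Qed.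

(* For w = s1 .. sn, the number of i with s1 .. s(i-1) si s(i-1) .. s1 ≡ t,
   computed by conjugating t along w.  Only its parity is invariant under ≡
   on w (Tits' argument). *)
Fixpoint refl_count (w t : seq S) : nat :=
  if w is s :: w' then `[< [:: s] ≡ t >] + refl_count w' (s :: t ++ [:: s]) else 0.

Lemma refl_count_cat p w t :
  refl_count (p ++ w) t = refl_count p t + refl_count w (rev p ++ t ++ p).
Proof.
elim: p t => [|s p IH] t /=; first by rewrite cats0.
by rewrite IH addnA rev_cons -cats1 -!catA /= -catA.
Qed.

Lemma asbool_wequivr x t t' : t ≡ t' -> `[< x ≡ t >] = `[< x ≡ t' >].
Proof. by move=> tt'; apply: asbool_equiv_eq; rewrite tt'. Qed.

Lemma refl_count_wequivr w t t' : t ≡ t' -> refl_count w t = refl_count w t'.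
Proof.
elim: w t t' => [|s w IH] t t' tt' //=.
by rewrite (asbool_wequivr _ tt') (IH _ (s :: t' ++ [:: s])) ?tt'.
Qed.

Lemma asbool_wequiv_conj s x t : s :: [:: x] ++ [:: s] ≡ [:: x] ->
  `[< [:: x] ≡ s :: t ++ [:: s] >] = `[< [:: x] ≡ t >].
Proof. by move=> sx; apply: asbool_equiv_eq; rewrite -(conj_wequiv s [:: x] t) sx. Qed.

Lemma odd_refl_count_cancel s t : odd (refl_count [:: s; s] t) = false.
Proof. by rewrite /= asbool_wequiv_conj ?addn0 ?addnn ?odd_double ?wequiv_consK. Qed.

Lemma refl_count_commute s u t : c s u ->
  refl_count [:: s; u] t = refl_count [:: u; s] t.
Proof.
move=> csu; rewrite /= !addn0 addnC !asbool_wequiv_conj //=.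
  by rewrite -(wequiv_commute [:: u] csu) wequiv_consK.
by rewrite (wequiv_commute [:: s] csu) wequiv_consK.
Qed.

Lemma odd_refl_count_infix p m m' q t : m ≡ m' ->
  (forall t, odd (refl_count m t) = odd (refl_count m' t)) ->
  odd (refl_count (p ++ m ++ q) t) = odd (refl_count (p ++ m' ++ q) t).
Proof.
move=> mm' odd_m; rewrite !refl_count_cat !oddD odd_m.
by rewrite (@refl_count_wequivr q _ (rev m' ++ (rev p ++ t ++ p) ++ m')) // mm'.
Qed.

Lemma odd_refl_count_wstep a b t : wstep c a b ->
  odd (refl_count a t) = odd (refl_count b t).
Proof.
case=> [p q s|p q s u csu].
  rewrite -[p ++ q]/(p ++ [::] ++ q); apply: odd_refl_count_infix => [|T].
    exact: wequiv_consK.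
  exact: odd_refl_count_cancel.
apply: odd_refl_count_infix => [|T]; first exact: wequiv_commute.
by rewrite refl_count_commute.
Qed.

Lemma odd_refl_count_wequiv a b t : a ≡ b ->
  odd (refl_count a t) = odd (refl_count b t).
Proof.
elim=> [x y|//|x y _ //|x y z _ -> //]; exact: odd_refl_count_wstep.
Qed.

Lemma odd_refl_count_self x s t : t ≡ x ++ s :: rev x ->
  odd (refl_count (x ++ s :: rev x) t).
Proof.
elim: x t => [|y x IH] t tr /=; first by rewrite addn0 asboolT // tr.
set r := x ++ s :: rev x.
have rev_r : rev r = r by rewrite /r rev_cat /= rev_cons revK -cats1 -catA.
have tyry : t ≡ y :: r ++ [:: y] by rewrite tr /r rev_cons -cats1 -!catA.
have ytyr : y :: t ++ [:: y] ≡ r by rewrite tyry wequiv_conjK.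
have asbool_t : `[< [:: y] ≡ t >] = `[< [:: y] ≡ r >].
  by rewrite (asbool_wequivr _ tyry) asbool_wequiv_conj // wequiv_consK.
have asbool_rtr : `[< [:: y] ≡ r ++ (y :: t ++ [:: y]) ++ r >] = `[< [:: y] ≡ r >].
  by apply: asbool_wequivr; rewrite ytyr catA reflection_sq //; exists x, s.
rewrite rev_cons -cats1 -cat_cons catA -/r refl_count_cat rev_r /= addn0 !oddD (IH _ ytyr).
by rewrite asbool_t asbool_rtr; case: `[< _ >].
Qed.

Lemma odd_refl_count_reflection t : reflection c t -> odd (refl_count t t).
Proof.
by case=> x [s tx]; rewrite (odd_refl_count_wequiv t tx); apply: odd_refl_count_self.
Qed.

Lemma refl_count_gt0_exchange w t : 0 < refl_count w t ->
  exists a s b, w = a ++ s :: b /\ t ++ w ≡ a ++ b.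
Proof.
elim: w t => [|s w IH] t //=.
case: asboolP => [st _|_ /IH [a [r [b [-> tw]]]]].
  by exists [::], s, w; split=> //; rewrite -st /= wequiv_consK.
exists (s :: a), r, b; split=> //.
by rewrite /= -tw /= -catA wequiv_consK.
Qed.

Lemma wlen_subproof w : exists n, `[< exists2 w', w ≡ w' & size w' = n >].
Proof. by exists (size w); apply/asboolP; exists w. Qed.

Definition wlen w : nat := ex_minn (wlen_subproof w).

Lemma wlen_spec w : exists2 w', w ≡ w' & size w' = wlen w.
Proof. by rewrite /wlen; case: ex_minnP => n /asboolP. Qed.

Lemma wlen_min w w' : w ≡ w' -> wlen w <= size w'.
Proof.
by rewrite /wlen; case: ex_minnP => n _ min_n ww'; apply/min_n/asboolP; exists w'.
Qed.

Instance wlen_Proper : Proper (wequiv c ==> eq) wlen.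
Proof.
move=> u v uv; apply/eqP; rewrite eqn_leq; apply/andP; split.
  by have [v' vv' <-] := wlen_spec v; apply: wlen_min; rewrite uv.
by have [u' uu' <-] := wlen_spec u; apply: wlen_min; rewrite -uv.
Qed.

Lemma odd_wlen w : odd (wlen w) = odd (size w).
Proof. by have [w' ww' <-] := wlen_spec w; rewrite (wequiv_odd_size ww'). Qed.

Lemma wlen_cons_le s w : wlen (s :: w) <= (wlen w).+1.
Proof.
by have [w' ww' <-] := wlen_spec w; apply: (@wlen_min _ (s :: w')); rewrite ww'.
Qed.

Lemma wlen_cons s w : wlen (s :: w) = (wlen w).+1 \/ wlen w = (wlen (s :: w)).+1.
Proof.
have le1 := wlen_cons_le s w; have le2 := wlen_cons_le s (s :: w).
rewrite wequiv_consK in le2.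
have : wlen (s :: w) != wlen w.
  by apply/eqP => eq_len; move: (odd_wlen (s :: w)); rewrite eq_len odd_wlen /=; case: odd.
lia.
Qed.

Lemma strong_exchange t w : reflection c t -> wlen (t ++ w) < wlen w ->
  exists a s b, w = a ++ s :: b /\ t ++ w ≡ a ++ b.
Proof.
move=> reft lt_tw_w; apply: refl_count_gt0_exchange.
case odd_w: (odd (refl_count w t)); first exact: odd_gt0.
have [u tw_u size_u] := wlen_spec (t ++ w).
have w_tu : w ≡ t ++ u by rewrite -tw_u reflectionK.
have odd_u : odd (refl_count u t).
  move: odd_w; rewrite (odd_refl_count_wequiv t w_tu) refl_count_cat oddD.
  rewrite odd_refl_count_reflection // (@refl_count_wequivr u _ t) ?catA ?wequiv_rev_cat //.
  by move/negbFE.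
have [a [s [b [u_asb tu]]]] := refl_count_gt0_exchange (odd_gt0 odd_u).
have w_ab : w ≡ a ++ b by rewrite w_tu tu.
have := wlen_min w_ab; move: size_u; rewrite u_asb !size_cat /=; lia.
Qed.

Lemma odd_wlen_reflection t u : reflection c t -> odd (wlen (t ++ u)) = ~~ odd (wlen u).
Proof.
case=> x [s tx]; rewrite !odd_wlen (@wequiv_odd_size _ ((x ++ s :: rev x) ++ u)) ?tx //.
by rewrite !size_cat /= size_rev !oddD /=; case: odd; case: odd.
Qed.

Lemma len_ltP u v : len_lt c u v <-> wlen u < wlen v.
Proof.
split=> [[u' [uu' lt_u'v]] | lt_uv].
  by have [v' vv' <-] := wlen_spec v; apply: leq_ltn_trans (wlen_min uu') (lt_u'v _ vv').
have [u' uu' size_u'] := wlen_spec u; exists u'; split=> // v' vv'.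
by rewrite size_u'; apply: leq_trans lt_uv (wlen_min vv').
Qed.

Lemma bstepP u v :
  bstep c u v <-> exists t, [/\ reflection c t, v ≡ t ++ u & wlen u < wlen v].
Proof.
split=> [[t [reft [vut /len_ltP lt_uv]]] | [t [reft vtu lt_uv]]].
  exists (u ++ t ++ rev u); split=> //; first exact: reflection_conj.
  by rewrite vut -!catA wequiv_rev_cat cats0.
exists (rev u ++ t ++ u); split; last split; last exact/len_ltP.
  by have := reflection_conj (rev u) reft; rewrite revK.
by rewrite vtu !catA wequiv_cat_rev.
Qed.

Instance bstep_Proper : Proper (wequiv c ==> wequiv c ==> iff) (bstep c).
Proof.
suff imp u u' v v' : u ≡ u' -> v ≡ v' -> bstep c u v -> bstep c u' v'.
  by move=> u u' uu' v v' vv'; split; apply: imp; rewrite ?uu' ?vv'.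
move=> uu' vv' /bstepP [t [reft vtu lt_uv]]; apply/bstepP; exists t.
by split; rewrite -?uu' -?vv'.
Qed.

Instance bruhat_lt_Proper : Proper (wequiv c ==> wequiv c ==> iff) (bruhat_lt c).
Proof.
suff imp u u' v v' : u ≡ u' -> v ≡ v' -> bruhat_lt c u v -> bruhat_lt c u' v'.
  by move=> u u' uu' v v' vv'; split; apply: imp; rewrite ?uu' ?vv'.
move=> uu' vv' lt_uv; elim: lt_uv u' v' uu' vv' => [x y xy|x y z _ IHxy _ IHyz] u' v' uu' vv'.
  by apply: t_step; rewrite -uu' -vv'.
exact: t_trans (IHxy _ _ uu' (wequiv_refl y)) (IHyz _ _ (wequiv_refl y) vv').
Qed.

Lemma bruhat_le_lt_trans u v w : bruhat_le c u v -> bruhat_lt c v w -> bruhat_lt c u w.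
Proof. by case=> [-> // | lt_uv lt_vw]; apply: t_trans lt_uv lt_vw. Qed.

Lemma bruhat_lt_le_trans u v w : bruhat_lt c u v -> bruhat_le c v w -> bruhat_lt c u w.
Proof. by move=> lt_uv [<- // | lt_vw]; apply: t_trans lt_uv lt_vw. Qed.

Lemma bstep_ascent s w : wlen w < wlen (s :: w) -> bstep c w (s :: w).
Proof. by move=> asc_w; apply/bstepP; exists [:: s]; split=> //; exists [::], s. Qed.

Lemma bstep_descent s w : wlen (s :: w) < wlen w -> bstep c (s :: w) w.
Proof.
move=> desc_w; apply/bstepP; exists [:: s]; split=> //; first by exists [::], s.
by rewrite /= wequiv_consK.
Qed.

Lemma bstep_cons s u v :
  bstep c u v -> wlen (s :: u) < wlen (s :: v) -> bstep c (s :: u) (s :: v).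
Proof.
move=> /bstepP [t [reft vtu _]] lt_su_sv; apply/bstepP.
exists ([:: s] ++ t ++ rev [:: s]); split=> //; first exact: reflection_conj.
by rewrite vtu /= -catA /= wequiv_consK.
Qed.

Lemma descent_reflection s t v : reflection c t -> wlen (s :: v) < wlen v ->
  wlen (t ++ v) = wlen (s :: v) ->
  s :: t ++ v ≡ v \/ wlen (s :: t ++ v) < wlen (t ++ v).
Proof.
move=> reft desc_v eq_len.
have [z svz size_z] := wlen_spec (s :: v).
have vsz : v ≡ s :: z by rewrite -svz wequiv_consK.
have [a [r [b [sz_arb tsz]]]] : exists a r b, s :: z = a ++ r :: b /\ t ++ s :: z ≡ a ++ b.
  by apply: strong_exchange => //; rewrite -vsz eq_len.
case: a sz_arb tsz => [|a0 a] /= [s_a0 z_arb] tsz.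
  by left; rewrite vsz tsz z_arb.
rewrite -s_a0 in tsz; right.
have stv_ab : s :: t ++ v ≡ a ++ b by rewrite vsz tsz wequiv_consK.
have := wlen_min stv_ab; move: size_z; rewrite z_arb !size_cat /=; lia.
Qed.

Lemma bstep_lift s u v : bstep c u v -> wlen u < wlen (s :: u) ->
  wlen (s :: v) < wlen v -> bruhat_le c (s :: u) v.
Proof.
move=> uv asc_u desc_v.
have [lt_su_sv | le_sv_su] := ltnP (wlen (s :: u)) (wlen (s :: v)).
  right; apply: (@t_trans _ _ _ (s :: v)); apply: t_step.
    exact: bstep_cons.
  exact: bstep_descent.
left; case/bstepP: uv => t [reft vtu lt_uv].
have utv : u ≡ t ++ v by rewrite vtu reflectionK.
have eq_len : wlen (t ++ v) = wlen (s :: v).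
  have : wlen v != (wlen u).+2.
    apply/eqP => eq_v; move: (odd_wlen_reflection u reft); rewrite -vtu eq_v /= negbK.
    by case: odd.
  rewrite -utv; have := wlen_cons s u; have := wlen_cons s v; lia.
case: (descent_reflection reft desc_v eq_len); rewrite -utv // => desc_u.
by move: (ltn_trans asc_u desc_u); rewrite ltnn.
Qed.

Lemma bruhat_lift s u w : bruhat_lt c u w -> wlen u < wlen (s :: u) ->
  wlen (s :: w) < wlen w -> bruhat_le c (s :: u) w.
Proof.
move=> /clos_trans_t1n_iff; elim=> [u' w' uw|u' y w' uy yw IH] asc_u desc_w.
  exact: bstep_lift.
have lt_yw : bruhat_lt c y w' by apply/clos_trans_t1n_iff.
have [desc_y | asc_y] := ltnP (wlen (s :: y)) (wlen y).
  by right; apply: bruhat_le_lt_trans (bstep_lift uy asc_u desc_y) lt_yw.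
have {}asc_y : wlen y < wlen (s :: y) by case: (wlen_cons s y) asc_y; lia.
right; apply: bruhat_lt_le_trans (IH asc_y desc_w); apply/t_step/bstep_cons => //.
case/bstepP: uy => t [_ _ lt_uy]; have := wlen_cons s u'; lia.
Qed.

Lemma cover_ascent s x y : bruhat_cover c x y -> wlen x < wlen (s :: x) ->
  left_descent c s y -> s :: x ≡ y.
Proof.
move=> [lt_xy no_between] asc_x /len_ltP desc_y.
case: (bruhat_lift lt_xy asc_x desc_y) => // lt_sx_y.
by case: no_between; exists (s :: x); split=> //; exact/t_step/bstep_ascent.
Qed.

Lemma cover_descent s x y1 y2 : ~ y1 ≡ y2 ->
  bruhat_cover c x y1 -> bruhat_cover c x y2 ->
  left_descent c s y1 -> left_descent c s y2 -> left_descent c s x.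
Proof.
move=> ne_y cov1 cov2 desc1 desc2; apply/len_ltP.
case: (wlen_cons s x) => [eq_sx | ]; last lia.
have asc_x : wlen x < wlen (s :: x) by rewrite eq_sx.
by case: ne_y; rewrite -(cover_ascent cov1 asc_x desc1) (cover_ascent cov2 asc_x desc2).
Qed.

End RightAngledCoxeter.

Theorem lemma7p8 (S : finType) (c : rel S)
  (c_irr : forall s, ~~ c s s) (c_sym : forall s t, c s t = c t s)
  (x1 x2 y1 y2 : seq S) (q : S) :
  butterfly c x1 x2 y1 y2 ->
  left_descent c q y1 -> left_descent c q y2 ->
  left_descent c q x1 /\ left_descent c q x2.
Proof.
move=> [_ [ne_y [c11 [c12 [c21 c22]]]]] desc1 desc2.
by split; apply: (cover_descent ne_y).
Qed.
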